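(* Let $G$ be a finite group and $p$ a prime such that the Sylow $p$-subgroups of $G$ are cyclic of order $p^r$ with $r\ge1$. For an integer $k$, let $\mathcal P(G,k)$ denote the number of elements of $G$ whose order is divisible by $p^k$. Then, for every $1\le k\le r$, $$\mathcal P(G,k)=\frac{p^{r-k+1}-1}{p^{r-k+1}}\cdot\frac{|G|\,|Z_G(Q)|}{|N_G(Q)|},$$ where $Q$ is any non-trivial $p$-subgroup of $G$ (the ratio $|Z_G(Q)|/|N_G(Q)|$ does not depend on this choice). Furthermore, $\mathcal P(G,0)=|G|$, and $\mathcal P(G,k)=0$ for $k>r$.
   Context: $Z_G(Q)$ denotes the centraliser and $N_G(Q)$ the normaliser of $Q$ in $G$. *)

From mathcomp Require Import all_boot all_order all_algebra all_fingroup all_solvable.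
Set Implicit Arguments. Unset Strict Implicit. Unset Printing Implicit Defensive.

Definition nPow (gT : finGroupType) (G : {set gT}) (p k : nat) : nat :=
  #|[set x in G | (p ^ k %| #[x]%g)%N]|.

(* Write x = x_p * x_p'.  For a p-element y <> 1 lying in a Sylow subgroup S,
   the fibre {x | x_p = y} is in bijection with the p'-elements of C_G[y].
   In C_G[y] the Sylow subgroup S is cyclic and every element of its normaliser
   centralises it (an automorphism of a cyclic p-group of p'-order that fixes a
   nontrivial subgroup is trivial), so by Burnside's transfer theorem these
   p'-elements form a normal complement to S: the fibre has |C_G[y]|/p^r
   elements.  Moreover |C_G[y]| is |C_G(S)| times the number of Sylow subgroups
   containing y.  Summing over y and exchanging the sums, each Sylow subgroup
   contributes its p^r - p^(k-1) elements of order divisible by p^k, and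
   |Syl_p(G)| = |G : N_G(S)|.  Finally the Frattini argument applied to
   C_G(Q) <| N_G(Q) gives |C_G(Q)| / |N_G(Q)| = |C_G(S)| / |N_G(S)| for
   1 <> Q <= S. *)

From mathcomp Require Import all_boot all_order all_algebra all_fingroup all_solvable.
From mathcomp Require Import zify ring.
Import GRing.Theory Num.Theory.
Local Open Scope group_scope.
Set Implicit Arguments. Unset Strict Implicit. Unset Printing Implicit Defensive.

Lemma pfactor_dvdn_order_constt (gT : finGroupType) p k (x : gT) :
  prime p -> (p ^ k %| #[x.`_p])%N = (p ^ k %| #[x])%N.
Proof.
by move=> pr_p; rewrite order_constt !pfactor_dvdn ?logn_part ?part_gt0 ?order_gt0.
Qed.

(* The elements whose order is not divisible by p^k form the subgroup of
   solutions of y^(p^(k-1)) = 1, which has order p^(k-1). *)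
Lemma card_cyclic_pgroup_order_dvdn (gT : finGroupType) p r k (S : {group gT}) :
    prime p -> cyclic S -> #|S| = (p ^ r)%N -> (1 <= k <= r)%N ->
  #|[set y in S | p ^ k %| #[y]]| = (p ^ r - p ^ (k - 1))%N.
Proof.
move=> pr_p cS oS /andP[k_gt0 le_kr].
have pS : p.-group S by rewrite /pgroup oS pnatX pnat_id.
pose L := Group (group_Ldiv (p ^ (k - 1)) (cyclic_abelian cS)).
have sLS : L \subset S by apply/subsetP => x /LdivP[].
have oL : #|L| = (p ^ (k - 1))%N.
  apply/eqP; rewrite eqn_dvd; apply/andP; split.
    rewrite -(exponent_cyclic (cyclicS sLS cS)).
    by apply/exponentP => x /LdivP[].
  by apply: Frobenius_Ldiv; rewrite oS dvdn_exp2l //; lia.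
rewrite -oL -oS -(cardsID L S) (setIidPr sLS) addKn.
apply: eq_card => y; rewrite !inE; have [Sy | //] := boolP (y \in S).
have [m om] := p_natP (mem_p_elt pS Sy).
rewrite andbT -(order_dvdn y) om !dvdn_Pexp2l ?prime_gt1 //.
by apply/idP/idP => ?; lia.
Qed.

Lemma frac_expn_sub1 (R : numFieldType) (p m r : nat) : (0 < p)%N -> (m <= r)%N ->
  (((p ^ m)%:R - 1) / (p ^ m)%:R = (p ^ r - p ^ (r - m))%:R / (p ^ r)%:R :> R)%R.
Proof.
move=> p_gt0 le_mr; have pX_neq0 n : ((p ^ n)%:R != 0 :> R)%R.
  by rewrite pnatr_eq0 -lt0n expn_gt0 p_gt0.
have defpr : (p ^ r = p ^ (r - m) * p ^ m)%N by rewrite -expnD subnK.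
rewrite defpr -{2}[(p ^ (r - m))%N]muln1 -mulnBr !natrM natrB ?expn_gt0 ?p_gt0 //.
by rewrite -mulf_div divff ?mul1r.
Qed.

Section CyclicPgroup.
Variables (gT : finGroupType) (p : nat).
Hypothesis pr_p : prime p.
Implicit Types G S Q X Y : {group gT}.

Lemma cyclic_pgroup_meet_ntrivg S X Y :
    cyclic S -> p.-group S -> X \subset S -> Y \subset S ->
  X :!=: 1 -> Y :!=: 1 -> X :&: Y :!=: 1.
Proof.
move=> cS pS sXS sYS ntX ntY.
have oX := Ohm1_cyclic_pgroup_prime (cyclicS sXS cS) (pgroupS sXS pS) ntX.
have oY := Ohm1_cyclic_pgroup_prime (cyclicS sYS cS) (pgroupS sYS pS) ntY.
have sOXS := subset_trans (Ohm_sub 1 X) sXS.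
have sOYS := subset_trans (Ohm_sub 1 Y) sYS.
have eqO : 'Ohm_1(X) = 'Ohm_1(Y) by apply/eqP; rewrite (eq_subG_cyclic cS) ?oX ?oY.
have sOXY : 'Ohm_1(X) \subset X :&: Y by rewrite subsetI Ohm_sub eqO Ohm_sub.
apply: contraTneq sOXY => ->.
rewrite subG1; apply: contraTneq (prime_gt1 pr_p) => O1.
by rewrite -oX O1 cards1.
Qed.

(* The p-part of n lies in the normal Sylow subgroup S of N_G(S).  Its p'-part
   m acts coprimely on the abelian group S, so [S, m] and C_S(m) meet trivially;
   as C_S(m) contains Q and nontrivial subgroups of S meet nontrivially,
   [S, m] = 1. *)
Lemma subcent_normSylow_cyclic G S Q : p.-Sylow(G) S -> cyclic S ->
  Q \subset S -> Q :!=: 1 -> 'N_G(S) :&: 'C(Q) \subset 'C(S).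
Proof.
move=> sylS cS sQS ntQ; apply/subsetP=> n /setIP[Nn Cn].
have pS := pHall_pgroup sylS; have abS := cyclic_abelian cS.
have sNnN : <[n]> \subset 'N_G(S) by rewrite cycle_subG.
have Sn_p : n.`_p \in S.
  have sylSN : p.-Sylow('N_G(S)) S by rewrite Sylow_subnorm.
  have nsSN : S <| 'N_G(S) by rewrite normal_subnorm (pHall_sub sylS).
  rewrite (mem_normal_Hall sylSN nsSN) ?p_elt_constt //.
  exact: subsetP sNnN _ (cycle_constt _ _).
set m := n.`_p^'.
have nSm : <[m]> \subset 'N(S).
  by rewrite cycle_subG; have /setIP[] := subsetP sNnN m (cycle_constt _ _).
have Cm : m \in 'C(Q) by rewrite groupX.
have coSm : coprime #|S| #|<[m]>|.
  by rewrite (pnat_coprime pS) // -orderE; apply: p_elt_constt.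
have ntC : 'C_S(<[m]>) :!=: 1.
  apply: contraNneq ntQ => C1; rewrite -subG1 -C1 subsetI sQS.
  by rewrite centsC cycle_subG.
have sRS : [~: S, <[m]>] \subset S by rewrite commg_subl.
have RS1 : [~: S, <[m]>] = 1.
  have [//|ntR] := eqVneq [~: S, <[m]>] 1.
  have := cyclic_pgroup_meet_ntrivg cS pS sRS (subsetIl _ _) ntR ntC.
  by rewrite /= setIA (setIidPl sRS) coprime_abel_cent_TI ?eqxx.
have Cm_S : m \in 'C(S) by rewrite -cycle_subG centsC; apply/commG1P.
by rewrite -(consttC p n) groupM // (subsetP abS).
Qed.

End CyclicPgroup.

Section BurnsideTransfer.
Import FiniteModule.
Variables (gT : finGroupType) (p : nat) (H T : {group gT}).
Hypotheses (sylT : p.-Sylow(H) T) (abT : abelian T) (nTcT : 'N_H(T) \subset 'C(T)).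

Let sTH : T \subset H := pHall_sub sylT.
Let abTid : abelian (idm T @* T). Proof. by rewrite morphim_idm. Qed.

(* Both T and T^u are Sylow subgroups of C_H(a^u), hence conjugate there. *)
Lemma Sylow_conj_fixed a u : a \in T -> u \in H -> a ^ u \in T -> a ^ u = a.
Proof.
move=> Ta Hu Tau.
have sTC : T \subset 'C_H[a ^ u] by rewrite subsetI sTH sub_cent1 (subsetP abT).
have sTuC : T :^ u \subset 'C_H[a ^ u].
  rewrite subsetI -{1}(conjGid Hu) conjSg sTH cent1J conjSg sub_cent1.
  exact: (subsetP abT).
have sylTC : p.-Sylow('C_H[a ^ u]) T := pHall_subl sTC (subsetIl _ _) sylT.
have sylTuC : p.-Sylow('C_H[a ^ u]) (T :^ u)%G.
  by apply: pHall_subl sTuC (subsetIl _ _) _; rewrite pHallJ.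
have [c /setIP[Hc /cent1P cac] defT] := Sylow_trans sylTuC sylTC.
have NHuc : u * c \in 'N_H(T).
  by rewrite inE groupM //; apply/normP; rewrite conjsgM -defT.
have fix_uc : a ^ (u * c) = a.
  by apply/conjg_fixP/commgP/commute_sym/(centP (subsetP nTcT _ NHuc)).
by rewrite -{2}fix_uc conjgM; apply/esym/conjg_fixP/commgP/commute_sym.
Qed.

(* Expand the transfer along the <[g]>-orbits of the cosets of T: each orbit
   contributes a conjugate of a power of g lying in T, which is that power. *)
Lemma transfer_Sylow_cent g :
  g \in T -> transfer H abTid g = (fmod abTid g *+ #|H : T|)%R.
Proof.
move=> Tg; have Hg := subsetP sTH g Tg.
have sTTid : T \subset idm T @* T by rewrite morphim_idm.
have trX := transversalP (rcosets_cycle_partition sTH Hg).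
rewrite (transfer_cycle_expansion sTH abTid Hg trX).
rewrite -(sum_index_rcosets_cycle sTH Hg trX) -GRing.sumrMnr.
apply: eq_bigr => x Xx; set w := g ^+ _.
have Hx : x \in H := subsetP (transversal_sub trX) x Xx.
have Tw : w \in T by rewrite groupX.
have Twx : w ^ x^-1 \in T.
  have := mulg_exp_card_rcosets T g x.
  by rewrite mem_rcoset conjgE invgK mulgA.
rewrite (Sylow_conj_fixed Tw (groupVr Hx) Twx) /=.
by rewrite /restrm /= /w fmodX // (subsetP sTTid).
Qed.

(* The complement is the kernel of the transfer to T: on T the transfer is
   g |-> g ^+ #|H : T|, which is injective by coprimality. *)
Theorem Burnside_normal_complement :
  exists2 K : {group gT}, p^'.-Hall(H) K & K <| H.
Proof.
pose K := 'ker (transfer_morphism H abTid).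
have nsKH : K <| H := ker_normal _.
have sKH : K \subset H := normal_sub nsKH.
have sTTid : T \subset idm T @* T by rewrite morphim_idm.
have [_ pT p'iT] := and3P sylT.
have coT : coprime #|T| #|H : T| by rewrite (pnat_coprime pT p'iT).
have tiKT : K :&: T = 1.
  apply/trivgP/subsetP => g /setIP[Kg Tg]; rewrite inE.
  have /(congr1 val) := mker Kg; rewrite /= transfer_Sylow_cent //.
  rewrite fmvalZ fmodK ?(subsetP sTTid) // => gn1.
  by rewrite -(expgK coT Tg) gn1 expg1n.
have le_KT_H : (#|K| * #|T| <= #|H|)%N.
  by rewrite -TI_cardMg // subset_leq_card // mul_subG.
have le_H_KT : (#|H| <= #|K| * #|T|)%N.
  rewrite -(Lagrange sKH) leq_mul2l; apply/orP; right.
  have -> : #|H : K| = #|transfer_morphism H abTid @* H|.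
    by rewrite card_morphim setIid.
  rewrite (leq_trans (subset_leq_card (subsetT _))) // -(card_imset _ val_inj).
  have -> : #|T| = #|idm T @* T| by rewrite morphim_idm.
  apply: subset_leq_card.
  by apply/subsetP => _ /imsetP[u _ ->]; apply: fmodP.
have oKT : (#|K| * #|T|)%N = #|H| by apply/eqP; rewrite eqn_leq le_KT_H le_H_KT.
have oK : #|K| = #|H : T|.
  by apply/eqP; rewrite -(eqn_pmul2r (cardG_gt0 T)) oKT mulnC Lagrange.
have iK : #|H : K| = #|T|.
  by apply/eqP; rewrite -(eqn_pmul2l (cardG_gt0 K)) Lagrange // oKT.
by exists K => //; rewrite /pHall sKH /pgroup oK iK pnatNK p'iT.
Qed.

End BurnsideTransfer.

Lemma card_p'elt_Burnside gT p (H T : {group gT}) :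
    p.-Sylow(H) T -> abelian T -> 'N_H(T) \subset 'C(T) ->
  (#|[set z in H | p^'.-elt z]| * #|T| = #|H|)%N.
Proof.
move=> sylT abT nTcT; have [K hallK nsKH] := Burnside_normal_complement sylT abT nTcT.
have -> : [set z in H | p^'.-elt z] = K.
  apply/setP => z; rewrite inE; have [Hz | H'z] := boolP (z \in H).
    by rewrite (mem_normal_Hall hallK nsKH).
  by apply/esym/negbTE; apply: contra H'z; apply: subsetP (pHall_sub hallK) z.
by rewrite (card_Hall hallK) (card_Hall sylT) mulnC partnC.
Qed.

Section SylowCounting.
Variables (gT : finGroupType) (p : nat) (G : {group gT}).
Hypothesis pr_p : prime p.
Implicit Types S T : {group gT}.

Lemma nPow0 : nPow G p 0 = #|G|.
Proof. by apply: eq_card => x; rewrite inE expn0 dvd1n andbT. Qed.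

Lemma nPow_eq0 k : (logn p #|G| < k)%N -> nPow G p k = 0%N.
Proof.
move=> lt_logG_k; apply/eqP; rewrite cards_eq0; apply/eqP/setP => x.
rewrite !inE; apply/negbTE/andP => -[Gx /dvdn_trans/(_ (order_dvdG Gx))].
by rewrite pfactor_dvdn // leqNgt lt_logG_k.
Qed.

Lemma Sylow_superset_elt y :
  y \in G -> p.-elt y -> exists2 S : {group gT}, p.-Sylow(G) S & y \in S.
Proof.
move=> Gy py; have sYG : <[y]> \subset G by rewrite cycle_subG.
have [S sylS sYS] := Sylow_superset sYG py.
by exists S; rewrite -?cycle_subG.
Qed.

Lemma card_subnorm_Sylow S T :
  p.-Sylow(G) S -> p.-Sylow(G) T -> #|'N_G(S)| = #|'N_G(T)|.
Proof.
move=> sylS sylT; have [g Gg ->] := Sylow_trans sylS sylT.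
by rewrite normJ -{2}(conjGid Gg) -conjIg cardJg.
Qed.

Lemma card_subcent_Sylow S T :
  p.-Sylow(G) S -> p.-Sylow(G) T -> #|'C_G(S)| = #|'C_G(T)|.
Proof.
move=> sylS sylT; have [g Gg ->] := Sylow_trans sylS sylT.
by rewrite centJ -{2}(conjGid Gg) -conjIg cardJg.
Qed.

(* x |-> x.`_p^' is a bijection from the fibre over y onto the p'-elements
   of C_G[y], with inverse z |-> y * z. *)
Lemma card_constt_fiber y : y \in G -> p.-elt y ->
  #|[set x in G | x.`_p == y]| = #|[set z in 'C_G[y] | p^'.-elt z]|.
Proof.
move=> Gy py; rewrite -[RHS](card_imset _ (mulgI y)); apply: eq_card => x.
rewrite inE; apply/andP/imsetP => [[Gx /eqP xp_y] | [z]].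
  exists x.`_p^'; last by rewrite -{1}(consttC p x) xp_y.
  rewrite inE in_setI groupX //= p_elt_constt andbT; apply/cent1P; rewrite -xp_y.
  exact: commuteX2.
rewrite inE in_setI => /andP[/andP[Gz /cent1P czy] p'z] ->.
by rewrite groupM //= consttM // (constt_p_elt py) (constt1P _) ?mulg1.
Qed.

Lemma nPow_sum_constt_fibers k :
  nPow G p k = \sum_(y in G | p.-elt y && (p ^ k %| #[y]))
                 #|[set x in G | x.`_p == y]|.
Proof.
rewrite /nPow -sum1_card.
rewrite (partition_big (fun x => x.`_p)
          (fun y => (y \in G) && (p.-elt y && (p ^ k %| #[y])))) /=.
  apply: eq_bigr => y /andP[_ /andP[_ dvd_y]]; rewrite sum1_card.
  apply: eq_card => x; rewrite unfold_in /= !inE -andbA; congr (_ && _).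
  case: eqP => [xp_y | _]; rewrite ?andbT ?andbF //.
  by rewrite -(pfactor_dvdn_order_constt _ _ pr_p) xp_y.
move=> x; rewrite inE => /andP[Gx dvd_x].
by rewrite groupX //= p_elt_constt pfactor_dvdn_order_constt.
Qed.

Lemma sum_card_Sylow_mem k :
  \sum_(y in G | p.-elt y && (p ^ k %| #[y])) #|[set T in 'Syl_p(G) | y \in T]|
    = \sum_(T in 'Syl_p(G)) #|[set y in T | p ^ k %| #[y]]|.
Proof.
under eq_bigr do rewrite -sum1dep_card.
rewrite (exchange_big_dep (mem 'Syl_p(G))) /=; last by move=> y T _ /andP[].
apply: eq_bigr => T; rewrite inE => sylT; rewrite sum1dep_card.
apply: eq_card => y; rewrite !inE; have [Ty | _] := boolP (y \in T).
  by rewrite (subsetP (pHall_sub sylT)) // (mem_p_elt (pHall_pgroup sylT)) ?sylT ?andbT.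
by rewrite !andbF.
Qed.

End SylowCounting.

Section CyclicSylow.
Variables (gT : finGroupType) (p : nat) (G : {group gT}).
Hypotheses (pr_p : prime p) (cycSyl : forall S : {group gT}, p.-Sylow(G) S -> cyclic S).
Implicit Types S Q : {group gT}.

Lemma card_subcent_subnorm_Sylow S Q : p.-Sylow(G) S -> Q \subset S -> Q :!=: 1 ->
  (#|'C_G(Q)| * #|'N_G(S)| = #|'N_G(Q)| * #|'C_G(S)|)%N.
Proof.
move=> sylS sQS ntQ; have cS := cycSyl sylS; have sSG := pHall_sub sylS.
have sSCQ : S \subset 'C_G(Q).
  by rewrite subsetI sSG centsC (subset_trans sQS (cyclic_abelian cS)).
have sylSCQ : p.-Sylow('C_G(Q)) S := pHall_subl sSCQ (subsetIl _ _) sylS.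
have nQS : 'N(S) \subset 'N(Q) by rewrite char_norms ?sub_cyclic_char.
have NNQS : 'N_('N_G(Q))(S) = 'N_G(S).
  by rewrite -setIA (setIidPr nQS).
have CNQS : 'C_G(Q) :&: 'N_G(S) = 'C_G(S).
  have nSCQ := subcent_normSylow_cyclic pr_p sylS cS sQS ntQ.
  apply/setP => x; apply/idP/idP => [/setIP[/setIP[Gx CQx] NSx] | /setIP[Gx CSx]].
    by rewrite inE Gx (subsetP nSCQ) // inE NSx.
  by rewrite !in_setI Gx (subsetP (centS sQS)) ?(subsetP (cent_sub S)).
have := Frattini_arg (subcent_normal G Q) sylSCQ.
by rewrite NNQS => defNQ; rewrite -defNQ mul_cardG CNQS.
Qed.

Lemma Sylow_subcent1 S y : p.-Sylow(G) S -> y \in S -> p.-Sylow('C_G[y]) S.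
Proof.
move=> sylS Sy; have abS := cyclic_abelian (cycSyl sylS).
have sSCy : S \subset 'C_G[y] by rewrite subsetI (pHall_sub sylS) sub_cent1 (subsetP abS).
exact: pHall_subl sSCy (subsetIl _ _) sylS.
Qed.

Lemma subnorm_subcent1_Sylow S y : p.-Sylow(G) S -> y \in S -> y != 1 ->
  'N_('C_G[y])(S) = 'C_G(S).
Proof.
move=> sylS Sy nty; have sYS : <[y]> \subset S by rewrite cycle_subG.
have nSCY := subcent_normSylow_cyclic pr_p sylS (cycSyl sylS) sYS.
rewrite cycle_eq1 cent_cycle in nSCY; have {}nSCY := nSCY nty.
apply/setP => x; apply/idP/idP => [/setIP[/setIP[Gx Cyx] NSx] | /setIP[Gx CSx]].
  by rewrite inE Gx (subsetP nSCY) // !in_setI Gx NSx.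
rewrite !in_setI Gx (subsetP (cent_sub S)) // andbT.
by rewrite -cent_cycle (subsetP (centS sYS)).
Qed.

Lemma card_constt_fiber_Sylow S y : p.-Sylow(G) S -> y \in S -> y != 1 ->
  (#|[set x in G | x.`_p == y]| * #|S| = #|'C_G[y]|)%N.
Proof.
move=> sylS Sy nty; have Gy := subsetP (pHall_sub sylS) y Sy.
rewrite card_constt_fiber ?(mem_p_elt (pHall_pgroup sylS)) //.
apply: card_p'elt_Burnside (Sylow_subcent1 sylS Sy) _ _.
  exact: cyclic_abelian (cycSyl sylS).
by rewrite subnorm_subcent1_Sylow // subsetIr.
Qed.

Lemma Syl_subcent1 S y : p.-Sylow(G) S -> y \in S ->
  'Syl_p('C_G[y]) = [set T in 'Syl_p(G) | y \in T].
Proof.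
move=> sylS Sy; apply/setP => T; rewrite !inE; apply/idP/andP => [sylTC | [sylT Ty]].
  have [c /setIP[Gc /cent1P cyc] ->] := Sylow_trans (Sylow_subcent1 sylS Sy) sylTC.
  rewrite pHallJ ?sylS //; have <- : y ^ c = y by apply/conjg_fixP/commgP/commute_sym.
  by rewrite memJ_conjg.
exact: Sylow_subcent1.
Qed.

Lemma card_subcent1_Sylow S y : p.-Sylow(G) S -> y \in S -> y != 1 ->
  #|'C_G[y]| = (#|[set T in 'Syl_p(G) | y \in T]| * #|'C_G(S)|)%N.
Proof.
move=> sylS Sy nty; rewrite -(Syl_subcent1 sylS Sy) (card_Syl (Sylow_subcent1 sylS Sy)).
by rewrite -(subnorm_subcent1_Sylow sylS Sy nty) mulnC Lagrange ?subsetIl.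
Qed.

Lemma nPow_mul_card_Sylow S r k : p.-Sylow(G) S -> #|S| = (p ^ r)%N -> (1 <= k <= r)%N ->
  (nPow G p k * p ^ r * #|'N_G(S)| = #|'C_G(S)| * #|G| * (p ^ r - p ^ (k - 1)))%N.
Proof.
move=> sylS oS /andP[k_gt0 le_kr].
have oSyl (T : {group gT}) : p.-Sylow(G) T -> #|T| = (p ^ r)%N.
  by move=> sylT; rewrite -oS (card_Hall sylS) (card_Hall sylT).
have ntY y : (p ^ k %| #[y])%N -> y != 1.
  apply: contraTneq => ->; rewrite order1 dvdn1 -(expn0 p) eqn_exp2l ?prime_gt1 //.
  by rewrite -lt0n.
have sumC : (nPow G p k * p ^ r =
    #|'C_G(S)| * \sum_(y in G | p.-elt y && (p ^ k %| #[y]))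
                   #|[set T in 'Syl_p(G) | y \in T]|)%N.
  rewrite nPow_sum_constt_fibers // big_distrl big_distrr /=.
  apply: eq_bigr => y /andP[Gy /andP[py dvd_y]].
  have [T sylT Ty] := Sylow_superset_elt Gy py.
  rewrite -(oSyl T sylT) card_constt_fiber_Sylow ?ntY //.
  by rewrite (card_subcent1_Sylow sylT) ?ntY // (card_subcent_Sylow sylT sylS) mulnC.
rewrite sumC sum_card_Sylow_mem.
have -> : (\sum_(T in 'Syl_p(G)) #|[set y in T | p ^ k %| #[y]]|
           = #|'Syl_p(G)| * (p ^ r - p ^ (k - 1)))%N.
  rewrite -sum_nat_const; apply: eq_bigr => T; rewrite inE => sylT.
  by rewrite (card_cyclic_pgroup_order_dvdn pr_p (cycSyl sylT) (oSyl T sylT)) ?k_gt0.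
rewrite (card_Syl sylS) -[in RHS](Lagrange (subsetIl G 'N(S))).
by rewrite /=; nia.
Qed.

Lemma nPow_Sylow_formula S Q r k :
    p.-Sylow(G) S -> #|S| = (p ^ r)%N -> Q \subset S -> Q :!=: 1 -> (1 <= k <= r)%N ->
  ((nPow G p k)%:R : rat) = ((p ^ r - p ^ (k - 1))%:R / (p ^ r)%:R
                             * ((#|G| * #|'C_G(Q)|)%:R / #|'N_G(Q)|%:R))%R.
Proof.
move=> sylS oS sQS ntQ le1kr; set CS := #|'C_G(S)|; set NS := #|'N_G(S)|.
have /(congr1 (fun n => n%:R : rat)) := nPow_mul_card_Sylow sylS oS le1kr.
have /(congr1 (fun n => n%:R : rat)) := card_subcent_subnorm_Sylow sylS sQS ntQ.
rewrite !natrM => defCQ defN.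
have pr_neq0 : ((p ^ r)%:R != 0 :> rat)%R by rewrite pnatr_eq0 -lt0n expn_gt0 prime_gt0.
have NS_neq0 : (NS%:R != 0 :> rat)%R by rewrite pnatr_eq0 -lt0n cardG_gt0.
have NQ_neq0 : (#|'N_G(Q)|%:R != 0 :> rat)%R by rewrite pnatr_eq0 -lt0n cardG_gt0.
have -> : (#|'C_G(Q)|%:R = #|'N_G(Q)|%:R * CS%:R / NS%:R :> rat)%R.
  by rewrite -defCQ mulfK.
have -> : ((nPow G p k)%:R = CS%:R * #|G|%:R * (p ^ r - p ^ (k - 1))%:R
                              / ((p ^ r)%:R * NS%:R) :> rat)%R.
  by rewrite -defN -mulrA mulfK // mulf_neq0.
by field; rewrite pr_neq0 NS_neq0 NQ_neq0.
Qed.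
End CyclicSylow.

Unset Implicit Arguments.

Theorem proposition5p10 (gT : finGroupType) (G : {group gT}) (p r : nat) :
  prime p -> (1 <= r)%N ->
  (forall P : {group gT}, P \in 'Syl_p(G) -> cyclic P /\ #|P| = (p ^ r)%N) ->
  [/\ (forall (k : nat) (Q : {group gT}),
         (1 <= k <= r)%N -> Q \subset G -> p.-group Q -> Q :!=: 1 ->
         ((nPow G p k)%:R : rat)
         = (((p ^ (r - k + 1))%:R - 1) / (p ^ (r - k + 1))%:R
            * ((#|G| * #|'C_G(Q)|)%:R / #|'N_G(Q)|%:R))%R),
      nPow G p 0 = #|G|
    & forall k : nat, (r < k)%N -> nPow G p k = 0%N].
Proof.
move=> pr_p _ SylP.
have cycSyl (S : {group gT}) : p.-Sylow(G) S -> cyclic S.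
  by move=> sylS; apply: (SylP S _).1; rewrite inE.
have oSyl (S : {group gT}) : p.-Sylow(G) S -> #|S| = (p ^ r)%N.
  by move=> sylS; apply: (SylP S _).2; rewrite inE.
have [S0 sylS0] := Sylow_exists p G.
have lognG : logn p #|G| = r.
  by rewrite -(pfactorK r pr_p) -(oSyl S0 sylS0) (card_Hall sylS0) logn_part.
split=> [k Q le1kr sQG pQ ntQ | | k]; last 2 first.
- exact: nPow0.
- by rewrite -lognG; apply: nPow_eq0.
have [S sylS sQS] := Sylow_superset sQG pQ.
rewrite (nPow_Sylow_formula pr_p cycSyl sylS (oSyl S sylS) sQS ntQ le1kr).
have [k_gt0 le_kr] := andP le1kr.
rewrite (frac_expn_sub1 _ (prime_gt0 pr_p) (_ : r - k + 1 <= r)%N); last by lia.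
by rewrite (_ : r - (r - k + 1) = k - 1)%N //; lia.
Qed.
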